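(* $\mathrm{SL}(2,\mathbb{R})$ and $\mathrm{GL}(2,\mathbb{R})$ have the topological $R_\infty$-property.
   Context: For an automorphism $\varphi$ of a group $G$, the $\varphi$-twisted conjugacy classes are the equivalence classes of the relation $x\sim_\varphi y$ iff $y=gx\varphi(g)^{-1}$ for some $g\in G$; $R(\varphi)\in\mathbb{N}\cup\{\infty\}$ is their number. A topological group $G$ has the topological $R_\infty$-property if $R(\varphi)=\infty$ for every automorphism $\varphi$ of $G$ that is a homeomorphism (for a Lie group: every continuous automorphism). *)

From HB Require Import structures.
From mathcomp Require Import all_boot all_order all_algebra.
From mathcomp Require Import all_classical all_reals all_analysis.
Set Implicit Arguments. Unset Strict Implicit. Unset Printing Implicit Defensive.
Import Order.TTheory GRing.Theory Num.Theory.
Local Open Scope classical_set_scope.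
Local Open Scope ring_scope.

Definition SL2 (R : realType) : set 'M[R^o]_2 := [set A | \det A = 1].
Definition GL2 (R : realType) : set 'M[R^o]_2 := [set A | A \in unitmx].

Definition top_aut (R : realType) (G : set 'M[R^o]_2) (phi : 'M[R^o]_2 -> 'M[R^o]_2) :=
  [/\ (forall A, G A -> G (phi A)),
      (forall A B, G A -> G B -> phi (A *m B) = phi A *m phi B),
      {within G, continuous phi} &
      exists psi : 'M[R^o]_2 -> 'M[R^o]_2,
        [/\ (forall A, G A -> G (psi A)),
            (forall A, G A -> psi (phi A) = A),
            (forall A, G A -> phi (psi A) = A) &
            {within G, continuous psi}]].

Definition twisted_class (R : realType) (G : set 'M[R^o]_2)
    (phi : 'M[R^o]_2 -> 'M[R^o]_2) (x : 'M[R^o]_2) : set 'M[R^o]_2 :=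
  [set y | exists2 g, G g & y = g *m x *m invmx (phi g)].

Definition Reidemeister_infinite (R : realType) (G : set 'M[R^o]_2)
    (phi : 'M[R^o]_2 -> 'M[R^o]_2) : Prop :=
  infinite_set (twisted_class G phi @` G).

Definition top_Rinf (R : realType) (G : set 'M[R^o]_2) : Prop :=
  forall phi, top_aut G phi -> Reidemeister_infinite G phi.

From HB Require Import structures.
From mathcomp Require Import all_boot all_order all_algebra.
From mathcomp Require Import all_classical all_reals all_analysis.
From mathcomp Require Import ring lra.
Set Implicit Arguments. Unset Strict Implicit. Unset Printing Implicit Defensive.
Import Order.TTheory GRing.Theory Num.Theory.
Local Open Scope ring_scope.

(* An injective endomorphism phi of SL(2,R) sends
   the nontrivial unipotents u(t), v(t), which are conjugate to their squares,
   to elements of trace 2.  After a conjugation in GL(2,R), phi fixes u(1) and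
   v(-1) and maps u(t) to u(f t) with f additive; as diag(t, 1/t) conjugates
   u(1) to u(t^2), f preserves squares, hence order, so f is the identity and
   so is phi, the unipotents generating SL(2,R).  Thus phi is conjugation by
   some K.  An automorphism of GL(2,R) has determinant 1 on SL(2,R), so it is
   A |-> l(A) K A K^-1 with a nonzero scalar l(A).  For such phi the number
   tr(y K)^2 / det(y K) only depends on the twisted class of y, and it takes
   infinitely many values on SL(2,R). *)

Lemma unitmx_idem (F : comUnitRingType) n (X : 'M[F]_n) :
  X \in unitmx -> X *m X = X -> X = 1%:M.
Proof. by move=> uX /(congr1 (mulmx (invmx X))); rewrite mulKmx // mulVmx. Qed.

Section Mx2.
Variable R : realType.
Local Notation M := 'M[R^o]_2.

Definition mx2 (a b c d : R) : M :=
  \matrix_(i < 2, j < 2)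
    (if (i : nat) == 0%N then (if (j : nat) == 0%N then a else b)
     else (if (j : nat) == 0%N then c else d)).

Lemma mx2_00 a b c d : mx2 a b c d 0 0 = a. Proof. by rewrite mxE. Qed.
Lemma mx2_01 a b c d : mx2 a b c d 0 1 = b. Proof. by rewrite mxE. Qed.
Lemma mx2_10 a b c d : mx2 a b c d 1 0 = c. Proof. by rewrite mxE. Qed.
Lemma mx2_11 a b c d : mx2 a b c d 1 1 = d. Proof. by rewrite mxE. Qed.
Definition mx2E := (mx2_00, mx2_01, mx2_10, mx2_11).

Lemma mx2_eta (A : M) : A = mx2 (A 0 0) (A 0 1) (A 1 0) (A 1 1).
Proof.
apply/matrixP => i j; rewrite mxE.
by case: i => -[|[|i]] Hi //; case: j => -[|[|j]] Hj //=; congr (A _ _); exact: val_inj.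
Qed.

Lemma mx2P (A B : M) : A 0 0 = B 0 0 -> A 0 1 = B 0 1 -> A 1 0 = B 1 0 ->
  A 1 1 = B 1 1 -> A = B.
Proof. by rewrite [A]mx2_eta [B]mx2_eta !mx2E => -> -> -> ->. Qed.

Lemma mx2_inj a b c d a' b' c' d' :
  mx2 a b c d = mx2 a' b' c' d' -> [/\ a = a', b = b', c = c' & d = d'].
Proof.
move=> E; have e i j := congr1 (fun A : M => A i j) E.
by move: (e 0 0) (e 0 1) (e 1 0) (e 1 1); rewrite !mx2E.
Qed.

Lemma mulmx2 a b c d e f g h :
  mx2 a b c d *m mx2 e f g h = mx2 (a*e+b*g) (a*f+b*h) (c*e+d*g) (c*f+d*h).
Proof. by apply: mx2P; rewrite !mxE !big_ord_recl big_ord0 !mxE /= addr0. Qed.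

Lemma det_mx2 a b c d : \det (mx2 a b c d) = a * d - b * c.
Proof.
rewrite (expand_det_row _ 0) !big_ord_recl big_ord0 /cofactor !mxE /=.
by rewrite !det_mx11 !mxE /= expr0 expr1; ring.
Qed.

Lemma trace_mx2 a b c d : \tr (mx2 a b c d) = a + d.
Proof. by rewrite /mxtrace !big_ord_recl big_ord0 !mxE /= addr0. Qed.

Lemma mx2_1 : 1%:M = mx2 1 0 0 1.
Proof. by apply: mx2P; rewrite !mxE. Qed.

Lemma scale_mx2 k a b c d : k *: mx2 a b c d = mx2 (k * a) (k * b) (k * c) (k * d).
Proof. by apply: mx2P; rewrite !mxE. Qed.

Lemma mx2_N1 : - 1%:M = mx2 (-1) 0 0 (-1).
Proof. by apply: mx2P; rewrite !mxE /= ?oppr0. Qed.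

End Mx2.

Section SL2Elements.
Variable R : realType.
Local Notation M := 'M[R^o]_2.
Local Notation SL := (@SL2 R).

Definition unip_up (t : R) : M := mx2 1 t 0 1.
Definition unip_lo (t : R) : M := mx2 1 0 t 1.
Definition diag2 (a : R) : M := mx2 a 0 0 a^-1.
Definition weyl : M := mx2 0 1 (-1) 0.
Definition weyl_inv : M := mx2 0 (-1) 1 0.

Local Notation u := unip_up.
Local Notation v := unip_lo.

Lemma SL2_mx2 a b c d : a * d - b * c = 1 -> SL (mx2 a b c d).
Proof. by rewrite /SL2 /= det_mx2. Qed.

Lemma SL2_mul X Y : SL X -> SL Y -> SL (X *m Y).
Proof. by rewrite /SL2 /= det_mulmx => -> ->; rewrite mulr1. Qed.

Lemma SL2_unitmx X : SL X -> X \in unitmx.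
Proof. by rewrite /SL2 /= unitmxE => ->; rewrite unitr1. Qed.

Lemma SL2_1 : SL 1%:M.
Proof. by rewrite /SL2 /= det1. Qed.

Lemma SL2_N1 : SL (- 1%:M).
Proof. by rewrite mx2_N1; apply: SL2_mx2; lra. Qed.

Lemma SL2_up t : SL (u t). Proof. by apply: SL2_mx2; lra. Qed.
Lemma SL2_lo t : SL (v t). Proof. by apply: SL2_mx2; lra. Qed.

Lemma SL2_weyl : SL weyl.
Proof. by apply: SL2_mx2; lra. Qed.

Lemma SL2_weyl_inv : SL weyl_inv.
Proof. by apply: SL2_mx2; lra. Qed.

Lemma SL2_diag2 a : a != 0 -> SL (diag2 a).
Proof. by move=> a0; apply: SL2_mx2; rewrite mulr0 subr0 mulfV. Qed.

Lemma up0 : u 0 = 1%:M.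
Proof. by rewrite mx2_1. Qed.

Lemma upD s t : u (s + t) = u s *m u t.
Proof. by rewrite mulmx2; congr mx2; ring. Qed.

Lemma up_inj : injective u.
Proof. by move=> s t /mx2_inj[]. Qed.

Lemma invmx_up t : invmx (u t) = u (- t).
Proof.
rewrite -[LHS]mulmx1 -up0 -(subrr t) upD mulKmx //.
by apply: SL2_unitmx; exact: SL2_up.
Qed.

Lemma up_comm s t : u s *m u t = u t *m u s.
Proof. by rewrite -!upD addrC. Qed.

Lemma diag2_up_conj a s : a != 0 -> diag2 a *m u s = u (a * s * a) *m diag2 a.
Proof. by move=> a0; rewrite !mulmx2; congr mx2; field. Qed.

Lemma up_lo_up s t :
  u s *m v t *m u s = mx2 (1 + s * t) (s * (2 + s * t)) t (1 + s * t).
Proof. by rewrite !mulmx2; congr mx2; ring. Qed.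

Lemma weyl_up_lo : weyl = u 1 *m v (-1) *m u 1.
Proof. by rewrite up_lo_up; congr mx2; ring. Qed.

Lemma weyl_inv_up_lo : weyl_inv = u (-1) *m v 1 *m u (-1).
Proof. by rewrite up_lo_up; congr mx2; ring. Qed.

Lemma weylK : weyl *m weyl_inv = 1%:M.
Proof. by rewrite mulmx2 mx2_1; congr mx2; ring. Qed.

Lemma weyl_invK : weyl_inv *m weyl = 1%:M.
Proof. by rewrite mulmx2 mx2_1; congr mx2; ring. Qed.

Lemma weyl_sqr : weyl *m weyl = - 1%:M.
Proof. by rewrite mulmx2 mx2_N1; congr mx2; ring. Qed.

Lemma lo_weyl s : v s = weyl *m u (- s) *m weyl_inv.
Proof. by rewrite !mulmx2; congr mx2; ring. Qed.

Lemma diag2_up_lo a : a != 0 -> diag2 a = u a *m v (- a^-1) *m u a *m weyl_inv.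
Proof. by move=> a0; rewrite up_lo_up mulmx2; congr mx2; field. Qed.

Lemma mx2_LDU a b c d : a != 0 -> a * d - b * c = 1 ->
  mx2 a b c d = v (c / a) *m diag2 a *m u (b / a).
Proof.
move=> a0 hd; have -> : d = (1 + b * c) / a.
  by apply: (mulfI a0); rewrite mulrCA mulfV // mulr1; lra.
by rewrite !mulmx2; congr mx2; field.
Qed.

Lemma SL2_ind (P : M -> Prop) :
  (forall X Y, SL X -> SL Y -> P X -> P Y -> P (X *m Y)) ->
  (forall t, P (u t)) -> (forall t, P (v t)) -> forall X, SL X -> P X.
Proof.
move=> Pmul Pu Pv; pose Q X := SL X /\ P X.
have Qmul X Y : Q X -> Q Y -> Q (X *m Y).
  by case=> sX pX [sY pY]; split; [exact: SL2_mul | exact: Pmul].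
have Qu t : Q (u t) by split; [exact: SL2_up | exact: Pu].
have Qv t : Q (v t) by split; [exact: SL2_lo | exact: Pv].
have Qwi : Q weyl_inv.
  by rewrite weyl_inv_up_lo; repeat first [exact: Qu | exact: Qv | apply: (Qmul _ _)].
have Qbig X : SL X -> X 0 0 != 0 -> Q X.
  move=> sX a0; move: sX; rewrite [X]mx2_eta /SL2 /= det_mx2 => hd.
  rewrite (mx2_LDU a0 hd) diag2_up_lo //.
  by repeat first [exact: Qu | exact: Qv | exact: Qwi | apply: (Qmul _ _)].
move=> X sX; have [a0|a0] := eqVneq (X 0 0) 0; last by case: (Qbig X sX a0).
have -> : X = X *m weyl *m weyl_inv by rewrite -mulmxA weylK mulmx1.
apply: (proj2 (Qmul _ _ (Qbig _ _ _) Qwi)).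
  by apply: SL2_mul => //; exact: SL2_weyl.
move: sX; rewrite [X]mx2_eta /SL2 /= det_mx2 /weyl mulmx2 !mx2E a0 mul0r.
move=> hd; apply/eqP => E; have b0 : X 0 1 = 0 by lra.
by rewrite b0 mul0r in hd; lra.
Qed.

Lemma SL2_trace_sqr X : SL X -> \tr (X *m X) = \tr X ->
  \tr X = 2 \/ X *m X *m X = 1%:M.
Proof.
rewrite [X]mx2_eta /SL2 /= det_mx2 mulmx2 !trace_mx2.
set a := X 0 0; set b := X 0 1; set c := X 1 0; set d := X 1 1 => hd htr.
have : (a + d - 2) * (a + d + 1) = 0 by lra.
move/eqP; rewrite mulf_eq0 => /orP[/eqP|/eqP] h; [left; lra | right].
have Ed : d = -1 - a by lra.
have Ebc : b * c = - a - a * a - 1 by rewrite Ed in hd; lra.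
have Ha := congr1 (fun z => z * a) Ebc; have Hb := congr1 (fun z => z * b) Ebc.
have Hc := congr1 (fun z => z * c) Ebc; rewrite /= in Ha Hb Hc.
by rewrite !mulmx2 mx2_1 Ed; congr mx2; lra.
Qed.

Lemma SL2_sqr1 X : SL X -> X *m X = 1%:M -> X = 1%:M \/ X = - 1%:M.
Proof.
rewrite [X]mx2_eta /SL2 /= det_mx2 mulmx2 mx2_N1 mx2_1.
set a := X 0 0; set b := X 0 1; set c := X 1 0; set d := X 1 1.
move=> hd /mx2_inj[e00 e01 e10 e11].
have ad : a * (a + d) = 2 by lra.
have ad0 : a + d != 0 by apply/eqP => E; rewrite E mulr0 in ad; lra.
have b0 : b = 0.
  have : b * (a + d) = 0 by lra.
  by move/eqP; rewrite mulf_eq0 (negbTE ad0) orbF => /eqP.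
have c0 : c = 0.
  have : c * (a + d) = 0 by lra.
  by move/eqP; rewrite mulf_eq0 (negbTE ad0) orbF => /eqP.
have ead : d = a.
  have a0 : a != 0 by apply/eqP => E; rewrite E mul0r in ad; lra.
  have : a * (d - a) = 0 by rewrite b0 c0 in e00 e11; lra.
  by move/eqP; rewrite mulf_eq0 (negbTE a0) subr_eq0 => /eqP.
rewrite b0 c0 ead; have : (a - 1) * (a + 1) = 0 by nra.
by move/eqP; rewrite mulf_eq0 => /orP[/eqP|/eqP] h; [left|right]; congr mx2; lra.
Qed.

Lemma SL2_sqrN1_trace X : SL X -> X *m X = - 1%:M -> \tr X = 0.
Proof.
rewrite [X]mx2_eta /SL2 /= det_mx2 mulmx2 mx2_N1 trace_mx2 => hd /mx2_inj[e00 _ _ e11].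
have : (X 0 0 + X 1 1) * (X 0 0 + X 1 1) = 0 by lra.
by move/eqP; rewrite mulf_eq0 orbb => /eqP.
Qed.

End SL2Elements.

Section Unipotent.
Variable R : realType.
Local Notation M := 'M[R^o]_2.
Local Notation SL := (@SL2 R).
Local Notation u := (@unip_up R).
Local Notation v := (@unip_lo R).

Lemma up_neq1 (t : R) : t != 0 -> u t <> 1%:M.
Proof. by move=> t0; rewrite mx2_1 => /mx2_inj[_ e _ _]; rewrite e eqxx in t0. Qed.

Lemma lo_neq1 (t : R) : t != 0 -> v t <> 1%:M.
Proof. by move=> t0; rewrite mx2_1 => /mx2_inj[_ _ e _]; rewrite e eqxx in t0. Qed.

Lemma up_cube t : u t *m u t *m u t = u (t + t + t).
Proof. by rewrite -!upD. Qed.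

Lemma lo_cube t : v t *m v t *m v t = v (t + t + t).
Proof. by rewrite !mulmx2; congr mx2; ring. Qed.

Lemma triple_neq0 (t : R) : t != 0 -> t + t + t != 0.
Proof. by apply: contra => /eqP e; apply/eqP; lra. Qed.

Lemma sqrt2_sqr : Num.sqrt (2 : R) * Num.sqrt 2 = 2.
Proof. by rewrite -expr2 sqr_sqrtr //; lra. Qed.

Lemma sqrt2_neq0 : Num.sqrt (2 : R) != 0.
Proof. by apply/eqP => e; have := sqrt2_sqr; rewrite e mul0r; lra. Qed.

Lemma sqrt2_inv : (Num.sqrt (2 : R))^-1 = Num.sqrt 2 / 2.
Proof.
by apply: (mulfI sqrt2_neq0); rewrite mulfV ?sqrt2_neq0 // mulrA sqrt2_sqr mulfV.
Qed.

Lemma diag2_up_sqr t : diag2 (Num.sqrt 2) *m u t = u t *m u t *m diag2 (Num.sqrt 2).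
Proof. by rewrite diag2_up_conj ?sqrt2_neq0 // -upD mulrAC sqrt2_sqr mulr_natl mulr2n. Qed.

Lemma diag2_lo_sqr t :
  diag2 (Num.sqrt 2 / 2) *m v t = v t *m v t *m diag2 (Num.sqrt 2 / 2).
Proof.
rewrite !mulmx2 -sqrt2_inv invrK; have := sqrt2_inv; have := sqrt2_sqr.
by set s := Num.sqrt 2 => s2 si; congr mx2; rewrite ?si; lra.
Qed.

Lemma up_lo_up_sqr s : s != 0 ->
  (u s *m v (- s^-1) *m u s) *m (u s *m v (- s^-1) *m u s) = - 1%:M.
Proof. by move=> s0; rewrite up_lo_up mulmx2 mx2_N1; congr mx2; field. Qed.

Lemma up_lo_up_sqrN1 s t :
  (u s *m v t *m u s) *m (u s *m v t *m u s) = - 1%:M -> s != 0 /\ t = - s^-1.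
Proof.
move=> sq; have sX : SL (u s *m v t *m u s).
  by do ![exact: SL2_up | exact: SL2_lo | apply: SL2_mul].
have := SL2_sqrN1_trace sX sq; rewrite up_lo_up trace_mx2 => e.
have st : s * t = -1 by lra.
have s0 : s != 0 by apply/eqP => s0; rewrite s0 mul0r in st; clear -st; lra.
by split=> //; apply: (mulfI s0); rewrite mulrN mulfV // st.
Qed.

Lemma SL2_unipotent_conj X : SL X -> X <> 1%:M -> \tr X = 2 ->
  exists2 K, K \in unitmx & X *m K = K *m u 1.
Proof.
rewrite [X]mx2_eta /SL2 /= det_mx2 trace_mx2.
set a := X 0 0; set b := X 0 1; set c := X 1 0; set d := X 1 1 => hd X1 htr.
have Ed : d = 2 - a by lra.
rewrite Ed in hd X1 *; have [c0|c0] := eqVneq c 0.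
  have a1 : a = 1.
    have : (a - 1) * (a - 1) = 0 by rewrite c0 in hd; lra.
    by move/eqP; rewrite mulf_eq0 orbb subr_eq0 => /eqP.
  have b0 : b != 0.
    by apply/eqP => b0; apply: X1; rewrite mx2_1 b0 c0 a1; congr mx2; lra.
  exists (mx2 b 0 0 1); first by rewrite unitmxE det_mx2 unitfE; apply/eqP; lra.
  by rewrite !mulmx2 c0 a1; congr mx2; lra.
exists (mx2 (a - 1) 1 c 0); first by rewrite unitmxE det_mx2 unitfE; apply/eqP; lra.
have Ebc : b * c = - ((a - 1) * (a - 1)) by lra.
by rewrite !mulmx2; congr mx2; lra.
Qed.

Lemma SL2_unipotent_commute_up X : SL X -> \tr X = 2 -> X *m u 1 = u 1 *m X ->
  X = u (X 0 1).
Proof.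
rewrite [X]mx2_eta /SL2 /= det_mx2 trace_mx2 !mulmx2 !mx2E.
set a := X 0 0; set b := X 0 1; set c := X 1 0; set d := X 1 1.
by move=> hd htr /mx2_inj[e00 e01 e10 e11]; congr mx2; lra.
Qed.

Lemma SL2_unipotent_weyl X : SL X -> \tr X = 2 -> \tr (u 1 *m X *m u 1) = 0 ->
  exists r, u (- r) *m X *m u r = v (-1).
Proof.
rewrite [X]mx2_eta /SL2 /= det_mx2 !mulmx2 !trace_mx2.
set a := X 0 0; set b := X 0 1; set c := X 1 0; set d := X 1 1 => hd htr htw.
have Ec : c = -1 by lra.
have Ed : d = 2 - a by lra.
have Eb : b = (a - 1) ^+ 2 by rewrite Ec Ed in hd; rewrite expr2; lra.
by exists (1 - a); rewrite !mulmx2 Eb Ec Ed; congr mx2; ring.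
Qed.

End Unipotent.

Section SL2Mono.
Variable R : realType.
Local Notation M := 'M[R^o]_2.
Local Notation SL := (@SL2 R).
Local Notation u := (@unip_up R).
Local Notation v := (@unip_lo R).

Definition SL2_mono (phi : M -> M) : Prop :=
  [/\ forall X, SL X -> SL (phi X),
      forall X Y, SL X -> SL Y -> phi (X *m Y) = phi X *m phi Y &
      forall X Y, SL X -> SL Y -> phi X = phi Y -> X = Y].

Variable phi : M -> M.
Hypothesis phiP : SL2_mono phi.

Lemma SL2_mono1 : phi 1%:M = 1%:M.
Proof.
case: phiP => SLphi phiM _; apply: unitmx_idem.
  exact/SL2_unitmx/SLphi/SL2_1.
by rewrite -phiM ?mulmx1 //; exact: SL2_1.
Qed.

Lemma SL2_mono_eq1 X : SL X -> phi X = 1%:M -> X = 1%:M.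
Proof.
by case: phiP => _ _ phi_inj sX e; apply: (phi_inj _ _ sX (SL2_1 R)); rewrite e SL2_mono1.
Qed.

Lemma SL2_monoN1 : phi (- 1%:M) = - 1%:M.
Proof.
case: (phiP) => SLphi phiM _.
have sq : phi (- 1%:M) *m phi (- 1%:M) = 1%:M.
  have := phiM _ _ (SL2_N1 R) (SL2_N1 R).
  by rewrite mulNmx mulmxN opprK mulmx1 SL2_mono1 => <-.
case: (SL2_sqr1 (SLphi _ (SL2_N1 R)) sq) => // e.
exfalso; have := SL2_mono_eq1 (SL2_N1 R) e.
by rewrite mx2_N1 mx2_1 => /mx2_inj[e00 _ _ _]; clear -e00; lra.
Qed.

(* Being conjugate to one's own square is preserved by phi, and in SL(2)
   it forces trace 2 unless the element has order 3. *)
Lemma SL2_mono_unipotent X g : SL X -> SL g -> X <> 1%:M ->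
  X *m X *m X <> 1%:M -> g *m X = X *m X *m g ->
  phi X <> 1%:M /\ \tr (phi X) = 2.
Proof.
move=> sX sg X1 X3 gX; case: (phiP) => SLphi phiM _.
have sXX := SL2_mul sX sX.
split; first by move/(SL2_mono_eq1 sX).
have ug := SL2_unitmx (SLphi _ sg).
have e : phi g *m phi X = phi X *m phi X *m phi g.
  by have := congr1 phi gX; rewrite !phiM.
have tr2 : \tr (phi X *m phi X) = \tr (phi X).
  by rewrite -(mulmxK ug (phi X *m phi X)) -e -mulmxA mxtrace_mulC mulmxKV.
case: (SL2_trace_sqr (SLphi _ sX) tr2) => // e3; exfalso; apply: X3.
by apply: SL2_mono_eq1; [exact: SL2_mul | rewrite !phiM].
Qed.

Lemma SL2_mono_up (t : R) : t != 0 -> phi (u t) <> 1%:M /\ \tr (phi (u t)) = 2.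
Proof.
move=> t0; apply: (SL2_mono_unipotent (SL2_up t) (SL2_diag2 (sqrt2_neq0 R))).
- exact: up_neq1.
- by rewrite up_cube; apply/up_neq1/triple_neq0.
- exact: diag2_up_sqr.
Qed.

Lemma SL2_mono_lo (t : R) : t != 0 -> \tr (phi (v t)) = 2.
Proof.
have s0 : Num.sqrt (2 : R) / 2 != 0 by rewrite mulf_neq0 ?(sqrt2_neq0 R) //; lra.
move=> t0; apply: (proj2 (SL2_mono_unipotent (SL2_lo t) (SL2_diag2 s0) _ _ _)).
- exact: lo_neq1.
- by rewrite lo_cube; apply/lo_neq1/triple_neq0.
- exact: diag2_lo_sqr.
Qed.

Lemma SL2_mono_conj K : K \in unitmx ->
  SL2_mono (fun X => invmx K *m phi X *m K).
Proof.
move=> uK; case: phiP => SLphi phiM phi_inj; split.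
- move=> X sX; rewrite /SL2 /= !det_mulmx det_inv (SLphi _ sX) mulr1 mulVf //.
  by rewrite -unitfE -unitmxE.
- by move=> X Y sX sY; rewrite phiM // !mulmxA mulmxK.
- move=> X Y sX sY /(congr1 (fun Z => K *m Z *m invmx K)) /=.
  by rewrite !mulmxA mulmxV // !mul1mx !mulmxK //; apply: phi_inj.
Qed.

End SL2Mono.

(* An additive map preserving nonnegativity is monotone; squeezing it between
   integers on the multiples [x *+ N] shows it moves no point. *)
Lemma additive_ge0_id (R : archiFieldType) (f : R -> R) :
  (forall x y, f (x + y) = f x + f y) -> f 1 = 1 ->
  (forall x, 0 <= x -> 0 <= f x) -> forall x, f x = x.
Proof.
move=> fD f1 f_ge0.
have f0 : f 0 = 0 by have := fD 0 0; rewrite addr0 => e; lra.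
have fN x : f (- x) = - f x by have := fD x (- x); rewrite subrr f0 => e; lra.
have f_mono x y : x <= y -> f x <= f y.
  move=> le_xy; have := f_ge0 (y - x); rewrite subr_ge0 => /(_ le_xy).
  by rewrite fD fN; lra.
have f_int (z : int) : f z%:~R = z%:~R.
  have f_nat (n : nat) : f n%:R = n%:R.
    by elim: n => [|n IHn]; rewrite ?f0 // -natr1 fD IHn f1.
  by case: z => n; rewrite ?NegzE ?mulrNz ?fN -pmulrn f_nat.
have fMn x (n : nat) : f (x *+ n) = f x *+ n.
  by elim: n => [|n IHn]; rewrite ?mulr0n ?f0 // !mulrS fD IHn.
have f_le x : f x <= x.
  rewrite leNgt; apply/negP => lt_xf; set d := f x - x.
  have d_gt0 : 0 < d by rewrite subr_gt0.
  set N := Num.bound d^-1.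
  have Nd : 1 < d * N%:R.
    have dN : d^-1 < N%:R by apply: archi_boundP; rewrite invr_ge0 ltW.
    by rewrite -(ltr_pM2l d_gt0) mulfV ?gt_eqF in dN.
  set y := x *+ N; set m := Num.floor y.
  have fy : f y = y + d * N%:R.
    by rewrite /y fMn /d mulr_natr mulrnBl addrC subrK.
  have := f_mono _ _ (ltW (floorD1_gt y)); rewrite fy f_int intrD mulr1z.
  by have := floor_le y; lra.
by move=> x; apply/eqP; rewrite eq_le f_le /=; have := f_le (- x); rewrite fN; lra.
Qed.

Section Rigidity.
Variable R : realType.
Local Notation M := 'M[R^o]_2.
Local Notation SL := (@SL2 R).
Local Notation u := (@unip_up R).
Local Notation v := (@unip_lo R).
#[local] Hint Resolve SL2_up SL2_lo SL2_weyl SL2_weyl_inv SL2_mul : core.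

Variable phi : M -> M.
Hypothesis phiP : SL2_mono phi.
Hypothesis phi_up1 : phi (u 1) = u 1.

Let SLphi X : SL X -> SL (phi X). Proof. by case: phiP => SLphi _ _; exact: SLphi. Qed.
Let phiM X Y : SL X -> SL Y -> phi (X *m Y) = phi X *m phi Y.
Proof. by case: phiP => _ phiM _; exact: phiM. Qed.

Let phiM3 X Y Z : SL X -> SL Y -> SL Z ->
  phi (X *m Y *m Z) = phi X *m phi Y *m phi Z.
Proof. by move=> sX sY sZ; rewrite !phiM //; exact: SL2_mul. Qed.

Lemma SL2_mono_upE t : phi (u t) = u (phi (u t) 0 1).
Proof.
have [->|t0] := eqVneq t 0; first by rewrite up0 (SL2_mono1 phiP) mxE /= up0.
apply: SL2_unipotent_commute_up; [exact: SLphi | exact: proj2 (SL2_mono_up phiP t0) |].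
by rewrite -phi_up1 -!phiM // up_comm.
Qed.

Lemma SL2_mono_lo_conj : exists r, u (- r) *m phi (v (-1)) *m u r = v (-1).
Proof.
have m1 : (-1 : R) != 0 by rewrite oppr_eq0 oner_neq0.
have phi_w : phi (weyl R) = u 1 *m phi (v (-1)) *m u 1.
  by rewrite weyl_up_lo phiM3 ?phi_up1.
apply: SL2_unipotent_weyl; [exact: SLphi | exact (SL2_mono_lo phiP m1) |].
rewrite -phi_w; apply: SL2_sqrN1_trace; first exact/SLphi/SL2_weyl.
by rewrite -phiM ?SL2_weyl // weyl_sqr (SL2_monoN1 phiP).
Qed.

Hypothesis phi_lo1 : phi (v (-1)) = v (-1).

Let f t := phi (u t) 0 1.
Let phi_up t : phi (u t) = u (f t). Proof. exact: SL2_mono_upE. Qed.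

Let fD s t : f (s + t) = f s + f t.
Proof. by apply: up_inj; rewrite -phi_up upD phiM // !phi_up upD. Qed.

Let f0 : f 0 = 0.
Proof. by have := fD 0 0; rewrite addr0 => e; lra. Qed.

Let fN s : f (- s) = - f s.
Proof. by have := fD s (- s); rewrite subrr f0 => e; lra. Qed.

Let phi_weyl : phi (weyl R) = weyl R.
Proof. by rewrite weyl_up_lo phiM3 // phi_up1 phi_lo1. Qed.

Let phi_weyl_inv : phi (weyl_inv R) = weyl_inv R.
Proof.
have := congr1 phi (weylK R); rewrite phiM ?SL2_weyl ?SL2_weyl_inv //.
rewrite phi_weyl (SL2_mono1 phiP) => /(congr1 (mulmx (weyl_inv R))).
by rewrite mulmxA weyl_invK mul1mx mulmx1.
Qed.

Let phi_lo s : phi (v s) = v (f s).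
Proof.
rewrite [in LHS]lo_weyl phiM3 ?SL2_weyl ?SL2_weyl_inv //.
by rewrite phi_weyl phi_weyl_inv phi_up fN -lo_weyl.
Qed.

Let f1 : f 1 = 1.
Proof. by rewrite /f phi_up1 mx2E. Qed.

(* phi maps diag2 t to diag2 (f t); conjugating u 1 by both gives f (t * t). *)
Let f_sqr t : f (t * t) = f t * f t.
Proof.
have [->|t0] := eqVneq t 0; first by rewrite mulr0 f0 mulr0.
have sw : SL (u t *m v (- t^-1) *m u t) by auto.
have phi_w : phi (u t *m v (- t^-1) *m u t) = u (f t) *m v (f (- t^-1)) *m u (f t).
  by rewrite phiM3 // !phi_up phi_lo.
have [ft0 Eq] : f t != 0 /\ f (- t^-1) = - (f t)^-1.
  by apply: up_lo_up_sqrN1; rewrite -phi_w -phiM // up_lo_up_sqr // SL2_monoN1.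
have phi_diag : phi (diag2 t) = diag2 (f t).
  by rewrite !diag2_up_lo // phiM ?SL2_weyl_inv // phi_w phi_weyl_inv Eq.
have := congr1 phi (diag2_up_conj 1 t0); have sd := SL2_diag2 t0.
rewrite !phiM // phi_diag !phi_up (diag2_up_conj _ ft0) f1 !mulr1.
by move/(can_inj (mulmxK (SL2_unitmx (SL2_diag2 ft0))))/up_inj/esym.
Qed.

Lemma SL2_mono_fix X : SL X -> phi X = X.
Proof.
have f_ge0 x : 0 <= x -> 0 <= f x.
  by move=> x0; rewrite -(sqr_sqrtr x0) expr2 f_sqr -expr2 sqr_ge0.
have f_id := additive_ge0_id fD f1 f_ge0.
move: X; apply: SL2_ind => [X Y sX sY eX eY|t|t].
- by rewrite phiM // eX eY.
- by rewrite phi_up f_id.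
- by rewrite phi_lo f_id.
Qed.

End Rigidity.

Lemma conj_fixed (F : comUnitRingType) n (K Y X : 'M[F]_n) :
  K \in unitmx -> invmx K *m Y *m K = X -> Y *m K = K *m X.
Proof. by move=> uK <-; rewrite !mulmxA mulmxV // mul1mx. Qed.

Section Inner.
Variable R : realType.
Local Notation M := 'M[R^o]_2.
Local Notation SL := (@SL2 R).
Local Notation u := (@unip_up R).
Local Notation v := (@unip_lo R).

(* Normalize phi (u 1) to u 1, then phi (v (-1)) to v (-1) by a conjugation
   that keeps u 1 fixed, and conclude by rigidity. *)
Lemma SL2_mono_inner phi : SL2_mono phi ->
  exists2 K, K \in unitmx & forall X, SL X -> phi X *m K = K *m X.
Proof.
move=> phiP; have [phiu1 tru1] := SL2_mono_up phiP (oner_neq0 R).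
have SLphi X : SL X -> SL (phi X) by case: phiP => SLphi _ _; exact: SLphi.
have [K uK eK] := SL2_unipotent_conj (SLphi _ (SL2_up 1)) phiu1 tru1.
pose phi1 X := invmx K *m phi X *m K.
have phi1P : SL2_mono phi1 := SL2_mono_conj phiP uK.
have phi1_up1 : phi1 (u 1) = u 1 by rewrite /phi1 -mulmxA eK mulKmx.
have [r er] := SL2_mono_lo_conj phi1P phi1_up1.
have ur : u r \in unitmx by apply/SL2_unitmx/SL2_up.
pose phi2 X := invmx (u r) *m phi1 X *m u r.
have phi2P : SL2_mono phi2 := SL2_mono_conj phi1P ur.
have phi2_up1 : phi2 (u 1) = u 1.
  by rewrite /phi2 phi1_up1 -mulmxA up_comm mulKmx.
have phi2_lo1 : phi2 (v (-1)) = v (-1) by rewrite /phi2 invmx_up.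
exists (K *m u r) => [|X sX]; first by rewrite unitmx_mul uK.
have /(conj_fixed ur) phi1X := SL2_mono_fix phi2P phi2_up1 phi2_lo1 sX.
by rewrite mulmxA (conj_fixed uK erefl) -/(phi1 X) -[LHS]mulmxA phi1X mulmxA.
Qed.

End Inner.

Section TwistedInvariant.
Variable R : realType.
Local Notation M := 'M[R^o]_2.
Local Notation SL := (@SL2 R).

Definition trdet (Y : M) : R := \tr Y ^+ 2 / \det Y.

Lemma trdet_scale_conj (Y g : M) l : g \in unitmx -> l != 0 ->
  trdet (l *: (g *m Y *m invmx g)) = trdet Y.
Proof.
move=> ug l0; rewrite /trdet mxtraceZ detZ mxtrace_mulC mulKmx //.
rewrite !det_mulmx det_inv; have dg : \det g != 0 by rewrite -unitfE -unitmxE.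
have [->|dY] := eqVneq (\det Y) 0; first by rewrite !(mulr0, mul0r, invr0).
by field; rewrite dY dg l0.
Qed.

(* If P K = l K g, the twisted conjugate y = g x P^-1 satisfies
   y K = l^-1 g (x K) g^-1. *)
Lemma trdet_twisted (K g x P : M) l : g \in unitmx -> P \in unitmx -> l != 0 ->
  P *m K = l *: (K *m g) -> trdet (g *m x *m invmx P *m K) = trdet (x *m K).
Proof.
move=> ug uP l0 PK.
have PiK : invmx P *m K = l^-1 *: (K *m invmx g).
  rewrite -[K in RHS](mulKmx uP) PK -scalemxAr -scalemxAl scalerA mulVf //.
  by rewrite scale1r mulmxA mulmxK.
rewrite -mulmxA PiK -scalemxAr !mulmxA -(mulmxA g) trdet_scale_conj //.
by rewrite invr_neq0.
Qed.

Lemma add_div_pos (D s : R) : 1 + `|D| <= s -> 0 < s + D / s.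
Proof.
move=> sD; have s0 : 0 < s by have := normr_ge0 D; lra.
have -> : s + D / s = (s * s + D) / s by field; lra.
by apply: divr_gt0 => //; have := ler_norm (- D); rewrite normrN; nra.
Qed.

Lemma add_div_inj (D s s' : R) : 1 + `|D| <= s -> 1 + `|D| <= s' ->
  s + D / s = s' + D / s' -> s = s'.
Proof.
move=> sD sD' e; have s0 : s != 0 by apply/eqP => s0; have := normr_ge0 D; lra.
have s0' : s' != 0 by apply/eqP => e0; have := normr_ge0 D; lra.
have : (s - s') * (s * s' - D) = 0.
  have := congr1 (fun z => z * (s * s')) e => /=.
  have -> : (s + D / s) * (s * s') = s * s * s' + D * s' by field.
  have -> : (s' + D / s') * (s * s') = s' * s' * s + D * s by field.
  by move=> h; lra.
move/eqP; rewrite mulf_eq0 => /orP[/eqP|/eqP] h; first lra.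
have D0 := normr_ge0 D; have DD := ler_norm D.
have : 0 <= (s - 1) * (s' - 1) by apply: mulr_ge0; lra.
by move=> ?; exfalso; lra.
Qed.

Lemma trdet_diag_inj (D s s' : R) : D != 0 -> 1 + `|D| <= s -> 1 + `|D| <= s' ->
  trdet (mx2 s 0 0 (D / s)) = trdet (mx2 s' 0 0 (D / s')) -> s = s'.
Proof.
move=> D0 sD sD'; have r_neq0 r : 1 + `|D| <= r -> r != 0.
  by move=> rD; apply/eqP => r0; have := normr_ge0 D; rewrite r0 in rD; lra.
rewrite /trdet !trace_mx2 !det_mx2 !mulr0 !subr0 !(mulrCA _ D) !mulfV ?r_neq0 //.
rewrite !mulr1 => /(mulIf (invr_neq0 D0))/eqP.
by rewrite eqrXn2 ?ltW ?add_div_pos // => /eqP; exact: add_div_inj.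
Qed.

End TwistedInvariant.

Section Reidemeister.
Variable R : realType.
Local Notation M := 'M[R^o]_2.
Local Notation SL := (@SL2 R).

(* With D = det K, the matrices diag(s, D / s) K^-1 lie in SL(2) and the
   invariant trdet (y K) of their twisted classes is (s + D / s)^2 / D. *)
Lemma Reidemeister_infinite_scaled_inner (G : set M) phi K :
  (forall A, G A -> A \in unitmx) -> (forall A, SL A -> G A) ->
  K \in unitmx -> phi 1%:M = 1%:M ->
  (forall g, G g -> exists2 l : R, l != 0 & phi g *m K = l *: (K *m g)) ->
  Reidemeister_infinite G phi.
Proof.
move=> GU SLG uK; set D := \det K; have D0 : D != 0 by rewrite -unitfE -unitmxE.
pose s (n : nat) : R := n%:R + 1 + `|D|.
have sD n : 1 + `|D| <= s n by rewrite /s; have := ler0n R n; lra.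
have s0 n : s n != 0.
  by apply/eqP => e; have := sD n; rewrite e; have := normr_ge0 D; lra.
have s_inj : injective s by move=> n m /addIr/addIr/eqP; rewrite eqr_nat => /eqP.
move=> phi1 phiK.
pose x n := mx2 (s n) 0 0 (D / s n) *m invmx K.
have xK n : x n *m K = mx2 (s n) 0 0 (D / s n) by rewrite /x mulmxKV.
have Gx n : G (x n).
  apply: SLG; rewrite /SL2 /= det_mulmx det_mx2 det_inv mulr0 subr0.
  by rewrite [s n * _]mulrC divfK // mulfV.
pose F n := twisted_class G phi (x n).
have F_inj : injective F.
  move=> n m eF; have : F m (x n).
    rewrite -eF; exists 1%:M; first exact/SLG/SL2_1.
    by rewrite mul1mx phi1 invmx1 mulmx1.
  case=> g Gg xn; have [l l0 phigK] := phiK g Gg.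
  have uP : phi g \in unitmx.
    have : phi g *m K \in unitmx by rewrite phigK unitmxZ ?unitfE // unitmx_mul uK GU.
    by rewrite unitmx_mul => /andP[].
  have := trdet_twisted (x m) (GU _ Gg) uP l0 phigK.
  by rewrite -xn !xK => /(trdet_diag_inj D0 (sD n) (sD m)) /s_inj.
move=> fin; have := finite_preimage (fun n m _ _ => F_inj n m) fin.
have -> : (F @^-1` (twisted_class G phi @` G))%classic = setT.
  by apply/seteqP; split => n //= _; exists (x n).
exact: infinite_nat.
Qed.

End Reidemeister.

Lemma det_conj_sqr (F : fieldType) n (A B : 'M[F]_n) :
  \det A != 0 -> \det B != 0 -> A *m B = B *m B *m A -> \det B = 1.
Proof.
move=> dA dB /(congr1 determinant); rewrite !det_mulmx => e.
have : \det B * \det B * \det A = 1 * \det B * \det A by rewrite -e mul1r mulrC.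
by move/(mulIf dA)/(mulIf dB).
Qed.

Section TopologicalAutomorphisms.
Variable R : realType.
Local Notation M := 'M[R^o]_2.
Local Notation SL := (@SL2 R).
Local Notation GL := (@GL2 R).
Local Notation u := (@unip_up R).
Local Notation v := (@unip_lo R).

Lemma top_aut_inj (G : set M) phi : top_aut G phi ->
  forall X Y, G X -> G Y -> phi X = phi Y -> X = Y.
Proof. by case=> _ _ _ [psi [_ phiK _ _]] X Y GX GY e; rewrite -(phiK X GX) e phiK. Qed.

Lemma SL2_conj A X : A \in unitmx -> SL X -> SL (A *m X *m invmx A).
Proof.
move=> uA; rewrite /SL2 /= !det_mulmx det_inv => ->; rewrite mulr1 mulfV //.
by rewrite -unitfE -unitmxE.
Qed.

Lemma mx2_commute_up_lo (B : M) : B *m u 1 = u 1 *m B -> B *m v 1 = v 1 *m B ->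
  B = B 0 0 *: 1%:M.
Proof.
rewrite [B]mx2_eta !mulmx2 mx2_1 scale_mx2 !mx2E.
by move=> /mx2_inj[e1 e2 e3 e4] /mx2_inj[f1 f2 f3 f4]; congr mx2; lra.
Qed.

Lemma GL2_hom_det phi : (forall A, GL A -> GL (phi A)) ->
  (forall A B, GL A -> GL B -> phi (A *m B) = phi A *m phi B) ->
  forall X, SL X -> \det (phi X) = 1.
Proof.
move=> GLphi phiM.
have det_phi0 A : GL A -> \det (phi A) != 0.
  by move=> GA; rewrite -unitfE -unitmxE; exact: GLphi.
have dil_sqr X D : SL X -> GL D -> D *m X = X *m X *m D -> \det (phi X) = 1.
  move=> sX GD DX; have uX := SL2_unitmx sX.
  apply: (det_conj_sqr (det_phi0 _ GD) (det_phi0 _ uX)).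
  have uXX : GL (X *m X) by rewrite /GL2 /= unitmx_mul uX.
  by have := congr1 phi DX; rewrite !phiM.
apply: SL2_ind => [X Y sX sY dX dY|t|t].
- by rewrite phiM ?det_mulmx ?dX ?dY ?mulr1 //; exact: SL2_unitmx.
- apply: (dil_sqr _ (mx2 2 0 0 1)); first exact: SL2_up.
    by rewrite /GL2 /= unitmxE det_mx2 unitfE; apply/eqP; lra.
  by rewrite !mulmx2; congr mx2; lra.
- apply: (dil_sqr _ (mx2 1 0 0 2)); first exact: SL2_lo.
    by rewrite /GL2 /= unitmxE det_mx2 unitfE; apply/eqP; lra.
  by rewrite !mulmx2; congr mx2; lra.
Qed.

(* psi = K^-1 phi K is the identity on SL(2), so B = A^-1 psi(A) commutes with
   SL(2) and is therefore scalar. *)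
Lemma GL2_hom_scaled_inner phi K : (forall A, GL A -> GL (phi A)) ->
  (forall A B, GL A -> GL B -> phi (A *m B) = phi A *m phi B) ->
  K \in unitmx -> (forall X, SL X -> phi X *m K = K *m X) ->
  forall A, GL A -> exists2 l : R, l != 0 & phi A *m K = l *: (K *m A).
Proof.
move=> GLphi phiM uK phiK A uA; pose psi X := invmx K *m phi X *m K.
have psiM X Y : GL X -> GL Y -> psi (X *m Y) = psi X *m psi Y.
  by move=> GX GY; rewrite /psi phiM // !mulmxA mulmxK.
have psi_id X : SL X -> psi X = X by move=> sX; rewrite /psi -mulmxA phiK // mulKmx.
have psiA s : SL s -> psi A *m s = A *m s *m invmx A *m psi A.
  move=> ss; have us := SL2_unitmx ss; have sc := SL2_conj uA ss.
  have e : A *m s = A *m s *m invmx A *m A by rewrite mulmxKV.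
  rewrite -{1}(psi_id _ ss) -psiM // {1}e psiM ?(psi_id _ sc) //.
  exact: SL2_unitmx sc.
pose B := invmx A *m psi A.
have B_comm s : SL s -> B *m s = s *m B.
  by move=> ss; rewrite /B -mulmxA psiA // !mulmxA mulVmx // mul1mx.
have EB := mx2_commute_up_lo (B_comm _ (SL2_up 1)) (B_comm _ (SL2_lo 1)).
set b := B 0 0 in EB.
have psiE : psi A = b *: A.
  by rewrite -[psi A](mulKVmx uA) -/B EB -scalemxAr mulmx1.
exists b; last by rewrite scalemxAr -psiE; apply: conj_fixed.
apply/eqP => b0; have : psi A \in unitmx by rewrite !unitmx_mul uK GLphi // unitmx_inv uK.
by rewrite psiE b0 scale0r unitmxE det0 unitfE eqxx.
Qed.

Lemma SL2_top_Rinf : top_Rinf SL.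
Proof.
move=> phi autphi; have phi_inj := top_aut_inj autphi.
case: autphi => SLphi phiM _ _.
have phiP : SL2_mono phi by split.
have [K uK phiK] := SL2_mono_inner phiP.
apply: (Reidemeister_infinite_scaled_inner (@SL2_unitmx R) _ uK (SL2_mono1 phiP)) => //.
by move=> g sg; exists 1; rewrite ?oner_neq0 // scale1r phiK.
Qed.

Lemma GL2_top_Rinf : top_Rinf GL.
Proof.
move=> phi autphi; have phi_inj := top_aut_inj autphi.
case: autphi => GLphi phiM _ _.
have phiP : SL2_mono phi.
  split=> [X sX | X Y sX sY | X Y sX sY]; first exact: GL2_hom_det.
    exact: phiM (SL2_unitmx sX) (SL2_unitmx sY).
  exact: phi_inj (SL2_unitmx sX) (SL2_unitmx sY).
have [K uK phiK] := SL2_mono_inner phiP.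
apply: (Reidemeister_infinite_scaled_inner (fun A GA => GA) (@SL2_unitmx R) uK
  (SL2_mono1 phiP)).
exact: GL2_hom_scaled_inner.
Qed.

End TopologicalAutomorphisms.

Theorem theorem5p7 (R : realType) : top_Rinf (@SL2 R) /\ top_Rinf (@GL2 R).
Proof. by split; [exact: SL2_top_Rinf | exact: GL2_top_Rinf]. Qed.
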